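(* Let $W, w_1,w_2,w_3,c_1,c_2,c_3$ be positive integers with $w_1<w_2<w_3$, $c_1<c_2<c_3$ and $\frac{c_1}{w_1}>\frac{c_2}{w_2}>\frac{c_3}{w_3}$. Let $D=\{(z_1,z_2)\in(\mathbb{Z}_{\ge 0})^2: z_iw_i\le W/2,\ i=1,2\}$ and define $C:D\to\mathbb{R}$ by $C(z_1,z_2)=c_1z_1+c_2z_2+c_3\left\lceil\frac{W-w_1z_1-w_2z_2}{w_3}\right\rceil$. Then $(D,C)$ is an Ameso($c_3$) pair, i.e., minimizing $C$ over $D$ is an Ameso($c_3$) optimization problem.
   Context: Floors and ceilings of vectors are taken componentwise. A set $D^n\subseteq\mathbb{Z}^n$ is an Ameso set if $\lceil(\vec x+\vec y)/2\rceil,\lfloor(\vec x+\vec y)/2\rfloor\in D^n$ for all $\vec x,\vec y\in D^n$. For $K\ge 0$, $(D^n,f)$ is an Ameso($K$) pair if $D^n$ is an Ameso set, $f:D^n\to\mathbb{R}$ is bounded below, and $f(\vec x)+f(\vec y)+K\ge f(\lceil(\vec x+\vec y)/2\rceil)+f(\lfloor(\vec x+\vec y)/2\rfloor)$ for all $\vec x,\vec y\in D^n$; minimizing $f$ over $D^n$ is then called an Ameso($K$) optimization problem. *)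

(* Integer vectors in Z^n are row vectors 'rV[int]_n. *)
From HB Require Import structures.
From mathcomp Require Import all_boot all_order all_algebra.
From mathcomp Require Import reals.
Set Implicit Arguments. Unset Strict Implicit. Unset Printing Implicit Defensive.
Import Order.TTheory GRing.Theory Num.Theory.
Local Open Scope ring_scope.

Definition vceil_mid (n : nat) (x y : 'rV[int]_n) : 'rV[int]_n :=
  \row_i Num.ceil (((x 0 i + y 0 i)%:~R : rat) / 2).
Definition vfloor_mid (n : nat) (x y : 'rV[int]_n) : 'rV[int]_n :=
  \row_i Num.floor (((x 0 i + y 0 i)%:~R : rat) / 2).

Definition ameso_set (n : nat) (D : pred 'rV[int]_n) : Prop :=
  forall x y, D x -> D y -> D (vceil_mid x y) /\ D (vfloor_mid x y).

(* (D, f) is an Ameso(K) pair; f is only relevant on D *)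
Definition ameso_pair (R : realType) (n : nat) (K : R)
    (D : pred 'rV[int]_n) (f : 'rV[int]_n -> R) : Prop :=
  0 <= K /\ ameso_set D /\
  (exists m : R, forall x, D x -> m <= f x) /\
  (forall x y, D x -> D y ->
     f (vceil_mid x y) + f (vfloor_mid x y) <= f x + f y + K).

From HB Require Import structures.
From mathcomp Require Import all_boot all_order all_algebra.
From mathcomp Require Import reals.
From mathcomp Require Import zify lra.
Import Order.TTheory GRing.Theory Num.Theory.
Local Open Scope ring_scope.

(* Let z, z' be the componentwise ceiling and floor of the midpoint of x, y.
   Then z + z' = x + y, and each coordinate of z and z' lies between those of
   x and y.  The second fact makes every product of integer intervals, D in
   particular, an Ameso set.  The first makes affine functions exactly
   midpoint-additive, so for C, an affine function plus c3 times the ceiling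
   of another one, the only loss is the rounding
   ceil a + ceil b <= ceil a' + ceil b' + 1 for a + b = a' + b'. *)

Definition ceil_mid (a b : int) : int := Num.ceil ((a + b)%:~R / 2 : rat).
Definition floor_mid (a b : int) : int := Num.floor ((a + b)%:~R / 2 : rat).

Lemma ceil_floor_mid_bounds (a b : int) :
  a + b <= 2 * ceil_mid a b <= a + b + 1 /\
  a + b - 1 <= 2 * floor_mid a b <= a + b.
Proof.
have /andP[ceil_gt ceil_le] := ceil_itv ((a + b)%:~R / 2 : rat).
have /andP[floor_le floor_lt] := floor_itv ((a + b)%:~R / 2 : rat).
rewrite -/(ceil_mid a b) in ceil_gt ceil_le.
rewrite -/(floor_mid a b) in floor_le floor_lt.
have : (a + b)%:~R <= (2 * ceil_mid a b)%:~R :> rat by rewrite intrM; lra.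
have : (2 * ceil_mid a b)%:~R < (a + b + 2)%:~R :> rat.
  by rewrite intrM !intrD in ceil_gt *; lra.
have : (2 * floor_mid a b)%:~R <= (a + b)%:~R :> rat by rewrite intrM; lra.
have : (a + b - 2)%:~R < (2 * floor_mid a b)%:~R :> rat.
  by rewrite intrM !intrD in floor_lt *; lra.
rewrite !ler_int !ltr_int; lia.
Qed.

Lemma ceil_mid_add_floor_mid (a b : int) : ceil_mid a b + floor_mid a b = a + b.
Proof. have := ceil_floor_mid_bounds a b; lia. Qed.

Definition int_interval (P : pred int) :=
  forall a b c, P a -> P b -> a <= c <= b -> P c.

Lemma int_interval_mid {P : pred int} {a b : int} : int_interval P ->
  P a -> P b -> P (ceil_mid a b) /\ P (floor_mid a b).
Proof.
move=> intP; wlog le_ab : a b / a <= b.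
  move=> hwlog Pa Pb; have [le_ab|/ltW le_ba] := leP a b; first exact: hwlog.
  by rewrite /ceil_mid /floor_mid addrC; apply: hwlog.
have := ceil_floor_mid_bounds a b => bounds Pa Pb.
by split; apply: (intP a b) => //; apply/andP; split; lia.
Qed.

Lemma int_interval_nonneg_mul_le {R : realDomainType} {w : int} (X : R) :
  0 <= w -> int_interval (fun t => (0 <= t) && ((t * w)%:~R <= X)).
Proof.
move=> w_ge0 a b c /andP[a_ge0 _] /andP[_ bw_le] /andP[le_ac le_cb].
apply/andP; split; first exact: le_trans le_ac.
by apply: le_trans bw_le; rewrite ler_int ler_wpM2r.
Qed.

Lemma vceil_midE n (x y : 'rV[int]_n) i :
  vceil_mid x y 0 i = ceil_mid (x 0 i) (y 0 i).
Proof. by rewrite mxE. Qed.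

Lemma vfloor_midE n (x y : 'rV[int]_n) i :
  vfloor_mid x y 0 i = floor_mid (x 0 i) (y 0 i).
Proof. by rewrite mxE. Qed.

Lemma vceil_mid_add_vfloor_mid n (x y : 'rV[int]_n) :
  vceil_mid x y + vfloor_mid x y = x + y.
Proof. by apply/rowP => i; rewrite !mxE; exact: ceil_mid_add_floor_mid. Qed.

Lemma ameso_set_rect {D : pred 'rV[int]_2} {P Q : pred int} :
  int_interval P -> int_interval Q ->
  (forall z, D z = P (z 0 0) && Q (z 0 1)) -> ameso_set D.
Proof.
move=> intP intQ eqD x y; rewrite !eqD => /andP[Px Qx] /andP[Py Qy].
rewrite !vceil_midE !vfloor_midE.
have [Pc Pf] := int_interval_mid intP Px Py.
have [Qc Qf] := int_interval_mid intQ Qx Qy.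
by rewrite Pc Pf Qc Qf.
Qed.

Definition is_affine {U V : zmodType} (f : U -> V) :=
  forall x y x' y', x + y = x' + y' -> f x + f y = f x' + f y'.

Lemma affine_cst {U V : zmodType} (c : V) : is_affine (fun _ : U => c).
Proof. by []. Qed.

Lemma affineB {U V : zmodType} {f g : U -> V} : is_affine f -> is_affine g ->
  is_affine (fun z => f z - g z).
Proof.
move=> af ag x y x' y' e.
by rewrite addrACA -opprD (af _ _ _ _ e) (ag _ _ _ _ e) opprD addrACA.
Qed.

Lemma affineD {U V : zmodType} {f g : U -> V} : is_affine f -> is_affine g ->
  is_affine (fun z => f z + g z).
Proof.
move=> af ag x y x' y' e.
by rewrite addrACA (af _ _ _ _ e) (ag _ _ _ _ e) addrACA.
Qed.

Lemma affine_comp {U V W : zmodType} {g : V -> W} {f : U -> V} :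
  is_affine f -> {morph g : a b / a + b} -> is_affine (fun z => g (f z)).
Proof. by move=> af gD x y x' y' /af e; rewrite -!gD e. Qed.

Lemma affine_coord {n} (i : 'I_n) : is_affine (fun z : 'rV[int]_n => z 0 i).
Proof.
by move=> x y x' y' /(congr1 (fun z : 'rV[int]_n => z 0 i)); rewrite !mxE.
Qed.

Lemma affine_scaled_coord {R : pzRingType} {n} (c : R) (i : 'I_n) :
  is_affine (fun z : 'rV[int]_n => c * (z 0 i)%:~R).
Proof.
apply: (affine_comp (g := fun t : int => c * t%:~R) (affine_coord i)) => a b.
by rewrite intrD mulrDr.
Qed.

Lemma affine_mid {n} {V : zmodType} {f : 'rV[int]_n -> V} (x y : 'rV[int]_n) :
  is_affine f -> f (vceil_mid x y) + f (vfloor_mid x y) = f x + f y.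
Proof. by move=> af; apply: af; rewrite vceil_mid_add_vfloor_mid. Qed.

Lemma ceil_add_le {R : archiRealFieldType} {a b a' b' : R} : a + b = a' + b' ->
  Num.ceil a + Num.ceil b <= Num.ceil a' + Num.ceil b' + 1.
Proof.
move=> e.
have /andP[a_gt _] := ceil_itv a; have /andP[b_gt _] := ceil_itv b.
have /andP[_ a'_le] := ceil_itv a'; have /andP[_ b'_le] := ceil_itv b'.
have : (Num.ceil a + Num.ceil b)%:~R < (Num.ceil a' + Num.ceil b' + 2)%:~R :> R.
  by rewrite !intrD in a_gt b_gt *; lra.
rewrite ltr_int; lia.
Qed.

Lemma ameso_ineq_affine_add_ceil (R : archiRealFieldType) n (K : R)
    (L A : 'rV[int]_n -> R) (x y : 'rV[int]_n) :
  let f z := L z + K * (Num.ceil (A z))%:~R in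
  0 <= K -> is_affine L -> is_affine A ->
  f (vceil_mid x y) + f (vfloor_mid x y) <= f x + f y + K.
Proof.
move=> f K_ge0 aL aA; rewrite /f addrACA affine_mid // -mulrDr -intrD.
have := ceil_add_le (affine_mid x y aA); rewrite -(ler_int R) !intrD => le_ceil.
have := ler_wpM2l K_ge0 le_ceil; rewrite !mulrDr mulr1 => le_K.
lra.
Qed.

Lemma cost_ge0 {R : realType} {W w1 w2 w3 c1 c2 c3 z1 z2 : int} :
  0 <= c1 -> 0 <= c2 -> 0 <= c3 -> 0 < w3 -> 0 <= z1 -> 0 <= z2 ->
  w1 * z1 + w2 * z2 <= W ->
  0 <= c1%:~R * z1%:~R + c2%:~R * z2%:~R
    + c3%:~R * (Num.ceil ((W - w1 * z1 - w2 * z2)%:~R / w3%:~R : R))%:~R :> R.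
Proof.
move=> c1_ge0 c2_ge0 c3_ge0 w3_gt0 z1_ge0 z2_ge0 fits.
have rest_ge0 : 0 <= ((W - w1 * z1 - w2 * z2)%:~R / w3%:~R : R).
  by apply: divr_ge0; rewrite ler0z; lia.
have ceil_ge0 : 0 <= Num.ceil ((W - w1 * z1 - w2 * z2)%:~R / w3%:~R : R).
  by rewrite ceil_ge0; lra.
by rewrite !addr_ge0 ?mulr_ge0 ?ler0z.
Qed.

Theorem theorem5 (R : realType) (W w1 w2 w3 c1 c2 c3 : int) :
  0 < W -> 0 < w1 -> 0 < w2 -> 0 < w3 -> 0 < c1 -> 0 < c2 -> 0 < c3 ->
  w1 < w2 -> w2 < w3 -> c1 < c2 -> c2 < c3 ->
  (c2%:~R / w2%:~R : R) < c1%:~R / w1%:~R ->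
  (c3%:~R / w3%:~R : R) < c2%:~R / w2%:~R ->
  let D : pred 'rV[int]_2 := fun z =>
    [&& 0 <= z 0 0, 0 <= z 0 1,
        (z 0 0 * w1)%:~R <= (W%:~R / 2 : R) &
        (z 0 1 * w2)%:~R <= (W%:~R / 2 : R)] in
  let C : 'rV[int]_2 -> R := fun z =>
    c1%:~R * (z 0 0)%:~R + c2%:~R * (z 0 1)%:~R
    + c3%:~R * (Num.ceil ((W - w1 * z 0 0 - w2 * z 0 1)%:~R / w3%:~R : R))%:~R in
  ameso_pair c3%:~R D C.
Proof.
move=> _ w1_gt0 w2_gt0 w3_gt0 c1_gt0 c2_gt0 c3_gt0 _ _ _ _ _ _ D C.
have c3_ge0 : 0 <= c3%:~R :> R by rewrite ler0z ltW.
split=> //; split.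
  pose half_W : R := W%:~R / 2.
  apply: (ameso_set_rect (int_interval_nonneg_mul_le half_W (ltW w1_gt0))
                         (int_interval_nonneg_mul_le half_W (ltW w2_gt0))).
  by move=> z; rewrite /D andbA andbACA.
split.
  exists 0 => z /and4P[z1_ge0 z2_ge0 z1_le z2_le].
  apply: (cost_ge0 (ltW c1_gt0) (ltW c2_gt0) (ltW c3_gt0) w3_gt0 z1_ge0 z2_ge0).
  by rewrite -(ler_int R) intrD [w1 * _]mulrC [w2 * _]mulrC; lra.
move=> x y _ _.
have affine_linear := affineD (affine_scaled_coord (c1%:~R : R) (0 : 'I_2))
                              (affine_scaled_coord (c2%:~R : R) 1).
have affine_rest : is_affine (fun z : 'rV[int]_2 =>
    (W - w1 * z 0 0 - w2 * z 0 1)%:~R / w3%:~R : R).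
  apply: (affine_comp (g := fun t : int => t%:~R / w3%:~R : R)).
    apply: affineB; first apply: affineB (affine_cst _) _.
    + exact: (affine_comp (g := *%R w1) (affine_coord 0) (mulrDr w1)).
    + exact: (affine_comp (g := *%R w2) (affine_coord 1) (mulrDr w2)).
  by move=> a b; rewrite intrD mulrDl.
exact: ameso_ineq_affine_add_ceil c3_ge0 affine_linear affine_rest.
Qed.
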